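(* Let $V=(\mathbb F_2)^n$ and let $T'$ be a subgroup of the translation group $T(V)$ of order $2^{n-1}$, and set $U=\{v\in V:\sigma_v\in T'\}$. Let $\mathcal A,\mathcal B$ be partitions of $V$. Then $T'$ maps $\mathcal A$ onto $\mathcal B$ (i.e. every non-identity $\rho\in T'$ maps $\mathcal A$ onto $\mathcal B$) if and only if $\mathcal A=\mathcal B$ and either $\mathcal A=\mathcal L(W)$ for some subspace $W$ of $V$, or $\mathcal A=\mathcal{LA}_U(W_1|W_2)$ for some subspaces $W_1,W_2$ of $U$.
   Context: $\sigma_v$ denotes the translation $x\mapsto x+v$ and $T(V)=\{\sigma_v:v\in V\}$. A permutation $\rho$ maps a partition $\mathcal A$ onto $\mathcal B$ if $\{A\rho:A\in\mathcal A\}=\mathcal B$. For a subspace $W$, $\mathcal L(W)=\{W+v:v\in V\}$ (linear partition). For a subspace $U$ of dimension $n-1$ and subspaces $W_1,W_2\subseteq U$, the linear-affine partition is $\mathcal{LA}_U(W_1|W_2)=\{W_1+v:v\in U\}\cup\{(W_2+\bar v)+v:v\in U\}$, where $\bar v$ is any element of $V\setminus U$ (the partition does not depend on this choice); if $W_1=W_2$ it equals $\mathcal L(W_1)$. *)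

From HB Require Import structures.
From mathcomp Require Import all_boot all_order all_algebra all_fingroup.
Set Implicit Arguments. Unset Strict Implicit. Unset Printing Implicit Defensive.
Import GRing.Theory.
Local Open Scope ring_scope.

Notation Vn n := 'rV['F_2]_n.

Section Defs.
Variable n : nat.

Definition transl (v : Vn n) : {perm Vn n} := perm (addIr v).

Definition Tgrp : {set {perm Vn n}} := [set transl v | v in [set: Vn n]].

Definition maps_onto (rho : {perm Vn n}) (A B : {set {set Vn n}}) : bool :=
  [set rho @: X | X : {set Vn n} in A] == B.

Definition coset (W : {vspace Vn n}) (v : Vn n) : {set Vn n} :=
  [set x | x - v \in W].

Definition linpart (W : {vspace Vn n}) : {set {set Vn n}} :=
  [set coset W v | v in [set: Vn n]].

Definition linaffpart (U : {set Vn n}) (W1 W2 : {vspace Vn n}) : {set {set Vn n}} :=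
  let vb := odflt 0 [pick x in ~: U] in
  [set coset W1 v | v in U] :|: [set coset W2 (vb + v) | v in U].

End Defs.

(* T' consists of involutions and has distinct non-identity elements r, s, so
   rs is not the identity either; if r, s and rs map A onto B, then
   A = s(sA) = sB = s(rA) = (rs)A = B, and A is invariant under translation by
   the hyperplane U.  Then the block of x + u is the block of x translated by u,
   for u in U.  If some block contains two points differing by w outside U,
   translations by U carry that pair onto {z, z + w} for every z, so A is
   invariant under all translations and the block of 0 is a subspace W with
   A = L(W).  Otherwise every block lies in a coset of U, and the blocks of 0
   and of a vector outside U, shifted to the origin, are subspaces W1, W2 of U
   with A = LA_U(W1|W2).  Conversely, translations permute the cosets of a
   subspace. *)

From Pilot Require Import Defs.
From HB Require Import structures.
From mathcomp Require Import all_boot all_order all_algebra all_fingroup.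
Set Implicit Arguments. Unset Strict Implicit. Unset Printing Implicit Defensive.
Import GRing.Theory.

Section Char2.
Local Open Scope ring_scope.
Variable V : lmodType 'F_2.
Implicit Types x y : V.

Lemma addrr_F2 x : x + x = 0.
Proof. by rewrite -mulr2n -scaler_nat (pchar_Fp_0 (isT : prime 2)) scale0r. Qed.

Lemma oppr_F2 x : - x = x.
Proof. by apply/esym/eqP; rewrite -addr_eq0 addrr_F2. Qed.

Lemma addKr_F2 x y : x + (x + y) = y.
Proof. by rewrite addrA addrr_F2 add0r. Qed.

Lemma addrK_F2 x y : x + y + y = x.
Proof. by rewrite -addrA addrr_F2 addr0. Qed.

End Char2.

Section PartitionImage.
Variable T : finType.
Implicit Types (r s : {perm T}) (A B : {set {set T}}).

Definition part_image r A := [set r @: X | X : {set T} in A].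

Lemma part_image1 A : part_image 1 A = A.
Proof.
by rewrite /part_image -[RHS]imset_id; apply: eq_imset => X; rewrite imset_perm1.
Qed.

Lemma part_imageM r s A : part_image (r * s) A = part_image s (part_image r A).
Proof.
rewrite /part_image -imset_comp; apply: eq_imset => X /=.
by rewrite -imset_comp; apply: eq_imset => x; rewrite permM.
Qed.

Lemma part_image_id r A : (forall X, X \in A -> r @: X \in A) -> part_image r A = A.
Proof.
move=> rA; apply/eqP; rewrite eqEcard card_imset; last exact/imset_inj/perm_inj.
by rewrite leqnn andbT; apply/subsetP => _ /imsetP [X XA ->]; exact: rA.
Qed.

Lemma involution_group_part_image_eq (G : {group {perm T}}) A B :
  2 < #|G| -> {in G, forall r, r * r = 1}%g ->
  {in G, forall r, r != 1%g -> part_image r A = B} -> A = B.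
Proof.
move=> G_gt2 Ginvol GAB.
have [r [s [Gr Gs rs]]] : exists r s, [/\ r \in G :\ 1%g, s \in G :\ 1%g & r != s].
  by apply/card_gt1P; rewrite -(leq_add2l (1%g \in G)) -cardsD1 group1.
move: Gr Gs; rewrite !in_setD1 => /andP [r_ne1 Gr] /andP [s_ne1 Gs].
have rs_ne1 : (r * s != 1)%g.
  apply: contra_neq rs => /mulg1_eq <-; apply: esym; apply: mulg1_eq; exact: Ginvol.
rewrite -{1}[A]part_image1 -(Ginvol s Gs) part_imageM (GAB s Gs s_ne1).
by rewrite -{1}(GAB r Gr r_ne1) -part_imageM GAB ?groupM.
Qed.

Variable A : {set {set T}}.
Hypothesis partA : partition A [set: T].

Local Notation blk := (pblock A).

Lemma mem_pblockT x : x \in blk x.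
Proof. by rewrite mem_pblock (cover_partition partA) inE. Qed.

Lemma pblock_memT x : blk x \in A.
Proof. by rewrite pblock_mem // (cover_partition partA) inE. Qed.

Lemma eq_pblockT x y : (blk x == blk y) = (y \in blk x).
Proof.
by rewrite eq_pblock ?(partition_trivIset partA) // (cover_partition partA) inE.
Qed.

Lemma partition_imset_pblock : A = [set blk x | x in [set: T]].
Proof.
apply/setP => X; apply/idP/imsetP => [XA | [x _ ->]]; last exact: pblock_memT.
have /set0Pn [x Xx] : X != set0 by apply: contraTneq XA => ->; case/and3P: partA.
by exists x; rewrite ?inE // (def_pblock (partition_trivIset partA) XA Xx).
Qed.

Lemma pblock_perm r x : part_image r A = A -> blk (r x) = r @: blk x.
Proof.
move=> rA; apply: def_pblock; first exact: partition_trivIset partA.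
  by rewrite -{2}rA; apply: imset_f; exact: pblock_memT.
by apply: imset_f; exact: mem_pblockT.
Qed.

End PartitionImage.

Section Translations.
Local Open Scope ring_scope.
Variable n : nat.
Local Notation V := 'rV['F_2]_n.
Implicit Types (u v x : V) (X : {set V}) (W : {vspace V}).

Lemma translE u x : transl u x = x + u.
Proof. by rewrite permE. Qed.

Lemma transl_inj : injective (@transl n).
Proof. by move=> u v /(congr1 (fun r : {perm V} => r 0)); rewrite !translE !add0r. Qed.

Lemma transl0 : transl 0 = 1%g :> {perm V}.
Proof. by apply/permP => x; rewrite translE perm1 addr0. Qed.

Lemma translD u v : (transl u * transl v)%g = transl (u + v).
Proof. by apply/permP => x; rewrite permM !translE addrA. Qed.

Lemma transl_involutive u : (transl u * transl u)%g = 1%g.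
Proof. by rewrite translD addrr_F2 transl0. Qed.

Lemma imset_transl u X : transl u @: X = [set x | x + u \in X].
Proof.
apply/setP => y; rewrite inE; apply/imsetP/idP => [[x Xx ->]|Xy].
  by rewrite translE addrK_F2.
by exists (y + u); rewrite ?translE ?addrK_F2.
Qed.

Lemma transl_coset u W v : transl u @: Defs.coset W v = Defs.coset W (v + u).
Proof.
by apply/setP => x; rewrite imset_transl !inE opprD (oppr_F2 u) addrA addrAC.
Qed.

Lemma linpart_transl_invariant u W : part_image (transl u) (linpart W) = linpart W.
Proof.
by apply: part_image_id => _ /imsetP [v _ ->]; rewrite transl_coset imset_f ?inE.
Qed.

Lemma linaffpart_transl_invariant (U : {set V}) u W1 W2 :
  {in U &, forall a b : V, a + b \in U} -> u \in U ->
  part_image (transl u) (linaffpart U W1 W2) = linaffpart U W1 W2.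
Proof.
move=> UD Uu; apply: part_image_id => X.
case/setUP=> /imsetP [v Uv ->]; rewrite transl_coset; apply/setUP;
  [left | right; rewrite -addrA]; apply: imset_f; exact (UD _ _ Uv Uu).
Qed.

Lemma addr_closed_vspace (S : {set V}) :
  0 \in S -> {in S &, forall a b : V, a + b \in S} ->
  exists W : {vspace V}, forall x, (x \in W) = (x \in S).
Proof.
move=> S0 SD; exists <<enum S>>%VS => x; apply/idP/idP => [|Sx]; last first.
  by apply: memv_span; rewrite mem_enum.
have: all [in S] (enum S) by apply/allP => y; rewrite mem_enum.
elim: (enum S) x => [|a s IHs] x; first by rewrite span_nil memv0 => _ /eqP ->.
case/andP=> Sa Ss; rewrite span_cons => /memv_addP [_ /vlineP [k ->] [y sy ->]].
apply: SD; last exact: IHs.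
have [->|->] : k = 0 \/ k = 1 by case: k => [[|[|//]] k2]; [left | right]; apply: val_inj.
  by rewrite scale0r.
by rewrite scale1r.
Qed.

End Translations.

Lemma index2_subr_notin (V : finZmodType) (U : {set V}) :
  {in U &, forall a b, (a + b)%R \in U} -> (#|U| + #|U| = #|V|)%N ->
  forall x y, x \notin U -> y \notin U -> (x - y)%R \in U.
Proof.
move=> UD cardU x y Ux Uy.
have coset_x : [set (x - u)%R | u in U] = ~: U.
  apply/eqP; rewrite eqEcard card_imset; last exact: subrI.
  have -> : #|~: U| = #|U| by apply/eqP; rewrite -(eqn_add2l #|U|) cardsC cardU.
  rewrite leqnn andbT; apply/subsetP => _ /imsetP [u Uu ->]; rewrite inE.
  by apply: contra Ux => Uxu; rewrite -(subrK u x) UD.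
have : y \in ~: U by rewrite inE.
by rewrite -coset_x => /imsetP [u Uu ->]; rewrite opprB addrC subrK.
Qed.

Section InvariantPartition.
Local Open Scope ring_scope.
Variable n : nat.
Local Notation V := 'rV['F_2]_n.
Implicit Types (p u v w x y z : V).

Variable A : {set {set V}}.
Hypothesis partA : partition A [set: V].
Local Notation blk := (pblock A).

Lemma pblock_transl u x : part_image (transl u) A = A -> blk (x + u) = transl u @: blk x.
Proof. by rewrite -translE; exact: (pblock_perm partA). Qed.

Lemma pblock_transl_eq u x y :
  part_image (transl u) A = A -> blk x = blk y -> blk (x + u) = blk (y + u).
Proof. by move=> uA; rewrite !pblock_transl // => ->. Qed.

Lemma pblock_coset (G : {set V}) (c : V) :
  {in G &, forall a b : V, a + b \in G} ->
  {in G, forall u, part_image (transl u) A = A} ->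
  (forall w, c + w \in blk c -> w \in G) ->
  exists W : {vspace V}, (forall x, x \in W -> x \in G) /\
    {in G, forall u, blk (c + u) = Defs.coset W (c + u)}.
Proof.
move=> GD Ginv blkG.
set S := [set w | c + w \in blk c].
have S0 : 0 \in S by rewrite inE addr0 (mem_pblockT partA).
have SD : {in S &, forall a b : V, a + b \in S}.
  move=> a b; rewrite !inE -!(eq_pblockT partA) => /eqP ca /eqP cb.
  have Ga : a \in G by apply: blkG; rewrite -(eq_pblockT partA) ca.
  by rewrite addrA addrAC -(pblock_transl_eq (Ginv a Ga) cb) ca.
have [W memW] := addr_closed_vspace S0 SD.
exists W; split=> [x|u Gu]; first by rewrite memW inE; exact: blkG.
apply/setP => x; rewrite pblock_transl ?Ginv // imset_transl !inE memW.
by rewrite inE oppr_F2 addrCA addKr_F2.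
Qed.

Variable U : {set V}.
Hypothesis UD : {in U &, forall a b : V, a + b \in U}.
Hypothesis U_index2 : forall x y, x \notin U -> y \notin U -> x + y \in U.
Hypothesis U_proper : U != [set: V].
Hypothesis U_inv : {in U, forall u, part_image (transl u) A = A}.

(* The two cases [p + z \in U] and [p + z \notin U] move the pair [p, p + w] onto
   [z, z + w] by a translation in [U], in the second case swapping its ends. *)
Lemma straddle_invariant p w :
  w \notin U -> p + w \in blk p -> part_image (transl w) A = A.
Proof.
move=> wU; rewrite -(eq_pblockT partA) => /eqP pw.
have blk_w z : blk (z + w) = blk z.
  have [pzU | pzU] := boolP (p + z \in U).
    have := pblock_transl_eq (U_inv pzU) pw.
    by rewrite addrAC !addKr_F2 => ->.
  have t_U : p + w + z \in U by rewrite addrAC; exact: U_index2.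
  have := pblock_transl_eq (U_inv t_U) pw.
  by rewrite addKr_F2 -addrA addKr_F2 addrC => ->.
apply: part_image_id => X; rewrite {1}(partition_imset_pblock partA) => /imsetP [x _ ->].
rewrite (_ : transl w @: blk x = blk x) ?(pblock_memT partA) //.
by apply/setP => y; rewrite imset_transl inE -!(eq_pblockT partA) blk_w.
Qed.

Lemma straddle_invariant_all w :
  w \notin U -> part_image (transl w) A = A -> forall v, part_image (transl v) A = A.
Proof.
move=> wU wA v; have [/U_inv // | vU] := boolP (v \in U).
by rewrite -(addKr_F2 w v) -translD part_imageM wA U_inv ?U_index2.
Qed.

Lemma invariant_partition_classification :
  (exists W : {vspace V}, A = linpart W) \/
  (exists W1 W2 : {vspace V},
     (forall x, x \in W1 -> x \in U) /\ (forall x, x \in W2 -> x \in U) /\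
     A = linaffpart U W1 W2).
Proof.
have [|no_straddle] := boolP [exists p, exists w, (w \notin U) && (p + w \in blk p)].
  case/existsP=> p /existsP [w /andP [wU pw]].
  have A_inv := straddle_invariant_all wU (straddle_invariant wU pw).
  have [W [_ blkW]] := @pblock_coset [set: V] 0 (fun a b _ _ => in_setT (a + b))
    (fun u _ => A_inv u) (fun w _ => in_setT w).
  left; exists W; rewrite (partition_imset_pblock partA); apply: eq_imset => x.
  by have := blkW x; rewrite inE add0r => ->.
have blkU c w : c + w \in blk c -> w \in U.
  move=> cw; apply: contraR no_straddle => wU.
  by apply/existsP; exists c; apply/existsP; exists w; rewrite wU.
set vb := odflt 0 [pick x in ~: U].
have vbU : vb \notin U.
  have /subsetPn [x _ xU] : ~~ ([set: V] \subset U) by rewrite subTset.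
  by rewrite /vb; case: pickP => [y | /(_ x)]; rewrite !inE // xU.
have [W1 [W1U blk1]] := pblock_coset UD U_inv (blkU 0).
have [W2 [W2U blk2]] := pblock_coset UD U_inv (blkU vb).
right; exists W1, W2; split=> //; split=> //.
have V_split : [set: V] = U :|: [set vb + u | u in U].
  apply/esym/setP => x; rewrite !inE; have [//|xU] := boolP (x \in U).
  by apply/imsetP; exists (vb + x); rewrite ?addKr_F2 ?U_index2.
rewrite (partition_imset_pblock partA) V_split imsetU -imset_comp /linaffpart -/vb.
congr (_ :|: _); apply: eq_in_imset => u Uu /=; first by rewrite -[u]add0r blk1.
exact: blk2.
Qed.

End InvariantPartition.

Section TranslationSubgroup.
Local Open Scope ring_scope.
Variables (n : nat) (T' : {group {perm 'rV['F_2]_n}}).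
Hypothesis T'_transl : T' \subset Tgrp n.
Local Notation U := [set v | transl v \in T'].

Lemma transl_subgroupP r : r \in T' -> exists2 u, u \in U & r = transl u.
Proof.
move=> Tr; have /imsetP [u _ ru] := subsetP T'_transl r Tr.
by exists u; rewrite ?inE -?ru.
Qed.

Lemma transl_subgroup_involutive r : r \in T' -> (r * r = 1)%g.
Proof. by case/transl_subgroupP=> u _ ->; exact: transl_involutive. Qed.

Lemma transl_subgroup_addr_closed : {in U &, forall a b, a + b \in U}.
Proof. by move=> a b; rewrite !inE -translD; exact: groupM. Qed.

Lemma card_transl_subgroup : #|U| = #|T'|.
Proof.
rewrite -(card_imset _ (@transl_inj n)); apply: eq_card => r.
apply/imsetP/idP => [[u Uu ->] | /transl_subgroupP [u Uu ->]]; last by exists u.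
by rewrite inE in Uu.
Qed.

Hypothesis T'_index2 : (#|T'| + #|T'| = 2 ^ n)%N.

Lemma transl_subgroup_addr_notin x y : x \notin U -> y \notin U -> x + y \in U.
Proof.
move=> xU yU; rewrite -(oppr_F2 y); apply: index2_subr_notin => //.
  exact: transl_subgroup_addr_closed.
by rewrite card_transl_subgroup T'_index2 card_mx card_Fp // mul1n.
Qed.

Lemma transl_subgroup_proper : U != [set: 'rV['F_2]_n].
Proof.
apply/negP => /eqP UT; move: T'_index2; rewrite -card_transl_subgroup UT cardsT.
rewrite card_mx card_Fp // mul1n -[X in _ = X]addn0 => /addnI.
by apply/eqP; rewrite expn_eq0.
Qed.

End TranslationSubgroup.

Theorem proposition3p6 (n : nat) (hn : 2 < n)
  (T' : {group {perm 'rV['F_2]_n}})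
  (hT : T' \subset Tgrp n) (hcard : #|T'| = 2 ^ n.-1)
  (A B : {set {set 'rV['F_2]_n}})
  (hA : partition A [set: 'rV['F_2]_n]) (hB : partition B [set: 'rV['F_2]_n]) :
  let U := [set v | transl v \in T'] in
  (forall rho, rho \in T' -> rho != 1%g -> maps_onto rho A B) <->
  (A = B /\
   ((exists W : {vspace 'rV['F_2]_n}, A = linpart W) \/
    (exists W1 W2 : {vspace 'rV['F_2]_n},
        (forall x, x \in W1 -> x \in U) /\ (forall x, x \in W2 -> x \in U) /\
        A = linaffpart U W1 W2))).
Proof.
move=> U; have n_gt0 : 0 < n by apply: ltn_trans hn.
have T'_index2 : #|T'| + #|T'| = 2 ^ n by rewrite hcard addnn -mul2n -expnS prednK.
split=> [maps_AB | [<- A_cases] r Tr _].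
  have AB : A = B.
    apply: (involution_group_part_image_eq _ (transl_subgroup_involutive hT)).
      by rewrite hcard (@leq_trans (2 ^ 2)) // leq_exp2l // -ltnS prednK.
    by move=> r Tr r_ne1; apply/eqP; exact: maps_AB.
  have U_inv : {in U, forall u, part_image (transl u) A = A}.
    move=> u; rewrite inE => T'u; have [->|u_ne1] := eqVneq (transl u) 1%g.
      exact: part_image1.
    by rewrite {2}AB; apply/eqP; exact (maps_AB _ T'u u_ne1).
  split=> //; exact (invariant_partition_classification hA
    (@transl_subgroup_addr_closed n T') (transl_subgroup_addr_notin hT T'_index2)
    (transl_subgroup_proper hT T'_index2) U_inv).
have [u Uu ->] := transl_subgroupP hT Tr.
apply/eqP; case: A_cases => [[W ->] | [W1 [W2 [_ [_ ->]]]]].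
  exact: linpart_transl_invariant.
exact: linaffpart_transl_invariant (@transl_subgroup_addr_closed n T') Uu.
Qed.
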